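(* Let $p$ be a prime and $k,\ell,m$ integers with $k>0$ and $\ell,m\ge0$; put $q=p^k$, $Q=p^{\ell}$, $R=p^m$, and \[ f_5(X)=X^{qQ+q}-X^{qQ+1}-X^{Q+q}+X^{Q+1}+X^{q^2R}+X^{qR}+X^{R}. \] Then $f_5(X)$ permutes $\mathbb{F}_{q^3}$ if and only if $\gcd(q-1,Q+1)=1$, or equivalently, if and only if $p=2$ and $\operatorname{ord}_2(k)\le\operatorname{ord}_2(\ell)$.
   Context: A polynomial permutes $\mathbb{F}_{q^3}$ if the induced map $\mathbb{F}_{q^3}\to\mathbb{F}_{q^3}$ is a bijection. For a nonzero integer $N$, $\operatorname{ord}_2(N)$ is the largest integer $s\ge0$ with $2^s\mid N$, and $\operatorname{ord}_2(0)=\infty$. *)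

From HB Require Import structures.
From mathcomp Require Import all_boot all_order all_algebra all_field.
Set Implicit Arguments. Unset Strict Implicit. Unset Printing Implicit Defensive.
Import GRing.Theory.
Local Open Scope ring_scope.

Definition permutes (F : finFieldType) (P : {poly F}) : Prop :=
  bijective (fun x : F => P.[x]).

Definition f5 (F : finFieldType) (q Q R : nat) : {poly F} :=
  'X^(q * Q + q) - 'X^(q * Q + 1) - 'X^(Q + q) + 'X^(Q + 1)
  + 'X^(q ^ 2 * R) + 'X^(q * R) + 'X^R.

(* 2-adic valuation, with ord_2(0) = infinity (encoded as None). *)
Definition ord2 (n : nat) : option nat :=
  if n == 0%N then None else Some (logn 2 n).

Definition ole (a b : option nat) : bool :=
  match a, b with
  | _, None => true
  | None, Some _ => false
  | Some x, Some y => (x <= y)%N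
  end.

From HB Require Import structures.
From mathcomp Require Import all_boot all_order all_algebra all_field.
From mathcomp Require Import cyclic zify ring.
Set Implicit Arguments. Unset Strict Implicit. Unset Printing Implicit Defensive.

(* Let Tr x = x^(q^2) + x^q + x.  Then f5(x) = (x^q - x)^(Q+1) + Tr(x)^R, where
   Tr(x) lies in F_q and x^q - x has trace zero.
   If d = gcd(q - 1, Q + 1) > 1, an element c of order d in F_q^* satisfies
   f5(c y) = f5(y) for every trace-zero y.
   If d = 1 then p = 2 by parity, and f5(x) = f5(x') says that y = x^q - x and
   y' = x'^q - x' have y^(Q+1) - y'^(Q+1) in F_q.  For trace-zero y the ratio
   r = y^(q-1) satisfies r^(q+1) = -1 - r, and eliminating y^(Q+1) leaves one
   equation between r and s = y'^(q-1).  Over a primitive cube root of unity w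
   this equation factors: X = (r - w)(s - w^2) and Y = (s - w)(r - w^2) satisfy
   X^a = Y^a and X^b = Y^b with a = 2^k -+ 1, b = 2^l +- 1 (signs fixed by the
   action of Frobenius on w), and a, b are coprime by the 2-adic hypothesis.
   Hence X = Y, so r = s, and then y = y', Tr x = Tr x' and x = x'. *)

(** * 2-adic arithmetic *)

Lemma dvdn_subn1_expn x n : x - 1 %| x ^ n - 1.
Proof. by rewrite !subn1 dvdn_pred_predX. Qed.

Lemma dvdn_addn1_sqr x : x + 1 %| x ^ 2 - 1.
Proof. by have := subn_sqr x 1; rewrite exp1n => ->; rewrite dvdn_mull. Qed.

Lemma dvdn_addn1_expn x n : odd n -> x + 1 %| x ^ n + 1.
Proof.
move=> n_odd; rewrite -(odd_double_half n) n_odd; set m := n./2.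
have -> : x ^ (1 + m.*2) + 1 = x * ((x ^ 2) ^ m - 1) + (x + 1).
  rewrite -expnM mul2n expnD expn1; case: x => [|x]; first by rewrite !mul0n.
  have := expn_gt0 x.+1 m.*2; nia.
by rewrite dvdn_add // dvdn_mull // (dvdn_trans (dvdn_addn1_sqr x)) ?dvdn_subn1_expn.
Qed.

Lemma odd_exp2_subn1 a : 0 < a -> odd (2 ^ a - 1).
Proof. by move=> a_gt0; rewrite oddB ?expn_gt0 // oddX orbF eqn0Ngt a_gt0. Qed.

Lemma coprime_exp2_subn1_addn1 a b : 0 < a ->
  coprime (2 ^ a - 1) (2 ^ b + 1) = (b == 0) || (logn 2 a <= logn 2 b).
Proof.
move=> a_gt0; have [-> | b_gt0] := posnP b.
  by rewrite coprimen2 odd_exp2_subn1.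
apply/idP/idP => [cop | le_ab].
  rewrite leqNgt; apply: contraL cop => lt_ba.
  have [b' b'_odd def_b] := pfactor_coprime (isT : prime 2) b_gt0.
  set c := 2 ^ logn 2 b in def_b.
  have dvd_b : 2 ^ c + 1 %| 2 ^ b + 1.
    by rewrite def_b mulnC expnM dvdn_addn1_expn // -coprime2n.
  have dvd_a : 2 ^ c + 1 %| 2 ^ a - 1.
    have /dvdnP[t ->] : c * 2 %| a by rewrite -expnSr pfactor_dvdn.
    by rewrite mulnC !expnM (dvdn_trans (dvdn_addn1_sqr _)) ?dvdn_subn1_expn.
  apply/negP => /eqP gcd1.
  have : 2 ^ c + 1 %| 1 by rewrite -[X in _ %| X]gcd1 dvdn_gcd dvd_a.
  by rewrite dvdn1 addn1 eqSS expn_eq0.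
have [a' a'_odd def_a] := pfactor_coprime (isT : prime 2) a_gt0.
set c := 2 ^ logn 2 a in def_a.
have /dvdnP[t def_b] : c %| b by rewrite pfactor_dvdn.
rewrite /coprime -dvdn1; set d := gcdn _ _; set x := 2 ^ c.
have d_sub : d %| x ^ (a' * t) - 1.
  apply: dvdn_trans (dvdn_gcdl _ _) _.
  by rewrite def_a mulnC expnM -/x expnM dvdn_subn1_expn.
have d_add : d %| x ^ (a' * t) + 1.
  apply: dvdn_trans (dvdn_gcdr _ _) _.
  by rewrite def_b mulnC expnM -/x mulnC expnM dvdn_addn1_expn // -coprime2n.
have d_2 : d %| 2.
  have := dvdn_sub d_add d_sub; have := expn_gt0 x (a' * t).
  by move: (x ^ _) => X X_gt0; rewrite (_ : X + 1 - (X - 1) = 2) //; lia.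
have /eqP odd_gcd : coprime (2 ^ a - 1) 2 by rewrite coprimen2 odd_exp2_subn1.
by rewrite -odd_gcd dvdn_gcd dvdn_gcdl.
Qed.

Lemma logn2_gt0 n : 0 < n -> (0 < logn 2 n) = ~~ odd n.
Proof. by move=> n_gt0; rewrite logn_gt0 mem_primes n_gt0 dvdn2. Qed.

Lemma logn2_odd n : odd n -> logn 2 n = 0.
Proof. by move=> n_odd; rewrite logn_coprime // coprime2n. Qed.

Lemma ole_ord2 k l : 0 < k ->
  ole (ord2 k) (ord2 l) = (l == 0) || (logn 2 k <= logn 2 l).
Proof. by move=> k_gt0; rewrite /ord2 /ole gtn_eqF //; case: eqP. Qed.

Lemma gcdn_expn_subn1_addn1_eq1 p k l : prime p -> 0 < k ->
  gcdn (p ^ k - 1) (p ^ l + 1) = 1 <-> p = 2 /\ ole (ord2 k) (ord2 l).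
Proof.
move=> p_pr k_gt0; rewrite ole_ord2 //.
have [-> | p_odd] := even_prime p_pr.
  by rewrite -coprime_exp2_subn1_addn1 //; split=> [/eqP | [_ /eqP]].
split=> [gcd1 | [p2]]; last by rewrite p2 in p_odd.
have : 2 %| gcdn (p ^ k - 1) (p ^ l + 1).
  by rewrite dvdn_gcd !dvdn2 oddD oddB ?expn_gt0 ?prime_gt0 // !oddX p_odd !orbT.
by rewrite gcd1.
Qed.

Lemma coprime_exp2_signed k l : 0 < k -> coprime (2 ^ k - 1) (2 ^ l + 1) ->
  (~~ odd k -> ~~ odd l) /\
  coprime (if odd k then 2 ^ k + 1 else 2 ^ k - 1)
          (if odd l then 2 ^ l - 1 else 2 ^ l + 1).
Proof.
move=> k_gt0 cop; have le_kl := cop; rewrite coprime_exp2_subn1_addn1 // in le_kl.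
have even_kl : ~~ odd k -> ~~ odd l.
  move=> k_even; have [-> // | l_gt0] := posnP l.
  move: le_kl; rewrite gtn_eqF //= => le_kl.
  by rewrite -logn2_gt0 // (leq_trans _ le_kl) // logn2_gt0.
split=> //; case: ifPn => k_odd; case: ifPn => l_odd //.
- by rewrite coprime_sym coprime_exp2_subn1_addn1 ?odd_gt0 // logn2_odd ?orbT.
- apply: (@coprime_dvdl _ (2 ^ (k * 2) - 1)).
    by rewrite expnM dvdn_addn1_sqr.
  rewrite coprime_exp2_subn1_addn1 ?muln_gt0 ?k_gt0 // lognM // logn2_odd // add0n.
  by have [-> // | l_gt0] := posnP l; rewrite logn2_gt0 ?orbT.
- by move: (even_kl k_odd); rewrite l_odd.
Qed.

Import GRing.Theory.
Local Open Scope ring_scope.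

Lemma expr1_coprime (R : nzRingType) (u : R) m n :
  coprime m n -> u ^+ m = 1 -> u ^+ n = 1 -> u = 1.
Proof.
have [-> | m_gt0] := posnP m.
  by rewrite /coprime gcd0n => /eqP -> _; rewrite expr1.
move=> cop um un; have [d u_prim d_m] := prim_order_exists m_gt0 um.
have d_n : (d %| n)%N by rewrite (prim_order_dvd u_prim) un.
have d1 : d = 1%N by apply/eqP; rewrite -dvdn1 -(eqP cop) dvdn_gcd d_m.
by move: (prim_expr_order u_prim); rewrite d1 expr1.
Qed.

Lemma expf_inj_coprime (F : fieldType) (x y : F) m n :
  coprime m n -> x ^+ m = y ^+ m -> x ^+ n = y ^+ n -> x = y.
Proof.
move=> cop xym xyn; have [y0 | y_neq0] := eqVneq y 0.
  have [m0 | m_gt0] := posnP m.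
    by move: cop xyn; rewrite m0 /coprime gcd0n => /eqP ->; rewrite !expr1.
  by move/eqP: xym; rewrite y0 expr0n gtn_eqF // expf_eq0 m_gt0 => /eqP.
apply/divr1_eq/(expr1_coprime cop).
  by rewrite expr_div_n xym divff // expf_neq0.
by rewrite expr_div_n xyn divff // expf_neq0.
Qed.

Lemma expf_eq_cancel (F : fieldType) (x y : F) m n : (0 < m)%N ->
  x ^+ m = y ^+ m -> x ^+ n.+1 * y = x * y ^+ n.+1 -> x ^+ n = y ^+ n.
Proof.
move=> m_gt0 xym; have [y0 | y_neq0] := eqVneq y 0.
  by move/eqP: xym; rewrite y0 expr0n gtn_eqF // expf_eq0 m_gt0 => /eqP ->.
have x_neq0 : x != 0.
  by apply: contraTneq (expf_neq0 m y_neq0) => x0; rewrite -xym x0 expr0n gtn_eqF ?eqxx.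
move=> e; apply: (mulfI (mulf_neq0 x_neq0 y_neq0)).
by rewrite mulrAC -exprS e exprS; ring.
Qed.

Lemma finField_card_pred_gt0 (F : finFieldType) : (0 < #|F|.-1)%N.
Proof. by case: #|F| (finNzRing_gt1 F) => [|[]]. Qed.

Lemma expf_card_pred (F : finFieldType) (x : F) : x ^+ #|F|.-1 = (x != 0)%:R.
Proof.
have [-> | x_neq0] := eqVneq x 0.
  by rewrite expr0n gtn_eqF ?finField_card_pred_gt0.
by apply: (mulfI x_neq0); rewrite mulr1 -exprS prednK ?expf_card // ltnW ?finNzRing_gt1.
Qed.

Lemma expf_card_inj (F : finFieldType) (x y : F) e : (0 < e)%N ->
  coprime #|F|.-1 e -> x ^+ e = y ^+ e -> x = y.
Proof.
move=> e_gt0 cop xye; apply: (expf_inj_coprime cop) (xye).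
have := congr1 (eq_op^~ 0) xye; rewrite /= !expf_eq0 e_gt0 /= => xy0.
by rewrite !expf_card_pred xy0.
Qed.

Lemma pchar_nat_expn (R : nzRingType) p n : p \in [pchar R] -> [pchar R].-nat (p ^ n)%N.
Proof. by move=> pR; rewrite pnatX pnatE ?pR ?(pcharf_prime pR). Qed.

Lemma exprBn_pchar (R : comNzRingType) (x y : R) n :
  [pchar R].-nat n -> (x - y) ^+ n = x ^+ n - y ^+ n.
Proof. by move=> nR; rewrite exprDn_pchar // exprNn_pchar. Qed.

(** * The trace and the shape of f5 *)

Definition trace3 (F : fieldType) (q : nat) (x : F) := x ^+ (q ^ 2) + x ^+ q + x.

Lemma horner_f5 (F : finFieldType) (q Q R : nat) (x : F) :
  [pchar F].-nat q -> [pchar F].-nat Q -> [pchar F].-nat R ->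
  (f5 F q Q R).[x] = (x ^+ q - x) ^+ Q.+1 + trace3 q x ^+ R.
Proof.
move=> q_pchar Q_pchar R_pchar.
rewrite /f5 /trace3 !hornerE exprS exprBn_pchar // !exprDn_pchar // -!exprM.
by rewrite !exprD expr1; ring.
Qed.

Section Trace.
Variables (F : finFieldType) (q : nat).
Hypotheses (q_pchar : [pchar F].-nat q) (card_F : #|F| = (q ^ 3)%N).

Let q2_pchar : [pchar F].-nat (q ^ 2)%N. Proof. by rewrite pnatX q_pchar. Qed.

Lemma trace3B (x y : F) : trace3 q (x - y) = trace3 q x - trace3 q y.
Proof. by rewrite /trace3 !exprBn_pchar //; ring. Qed.

Lemma trace3_frob (x : F) : trace3 q x ^+ q = trace3 q x.
Proof.
rewrite /trace3 !exprDn_pchar // -!exprM -expnSr -card_F expf_card mulnn.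
by rewrite [RHS]addrC addrA.
Qed.

Lemma trace3_frob_sub (x : F) : trace3 q (x ^+ q - x) = 0.
Proof.
rewrite trace3B -[trace3 q x]trace3_frob /trace3 !exprDn_pchar // -!exprM.
by rewrite [(q ^ 2 * q)%N]mulnC subrr.
Qed.

Lemma trace3_mull (c x : F) : c ^+ q = c -> trace3 q (c * x) = c * trace3 q x.
Proof.
by move=> cq; rewrite /trace3 !exprMn -mulnn exprM !cq; ring.
Qed.

End Trace.

(** * Twisted products over the cube roots of unity *)

Lemma cube_root_sqr (R : comNzRingType) (u u' : R) :
  u * u' = 1 -> u + u' = -1 -> u ^+ 2 = u'.
Proof.
move=> uu' u_add; have u_eq : u = -1 - u' by rewrite -u_add; ring.
by rewrite expr2 {2}u_eq mulrBr mulrN1 uu' -u_add; ring.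
Qed.

Lemma cube_root_shift (R : comNzRingType) (u u' r t : R) :
  u * u' = 1 -> u + u' = -1 -> r * t = -1 - r -> r * (t - u) = u' * (r - u).
Proof.
move=> uu' u_add rt; have u'_eq : u' = -1 - u by rewrite -u_add; ring.
by rewrite mulrBr rt mulrBr [u' * u]mulrC uu' u'_eq; ring.
Qed.

(* Let y, y' have trace zero, r = y^(q-1) and s = y'^(q-1).  That y^(Q+1) - y'^(Q+1)
   is fixed by x |-> x^q and by x |-> x^(q^2) gives two linear equations in
   y^(Q+1), y'^(Q+1); eliminating these leaves cross_norm Q r s = cross_norm Q s r. *)
Definition cross_norm (R : nzRingType) (Q : nat) (r s : R) :=
  (r ^+ Q.+1 - 1) * ((-1 - s) ^+ Q.+1 - 1).

Section Twist.
Variables (L : fieldType) (w w' : L).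
Hypotheses (ww' : w * w' = 1) (w_add : w + w' = -1).

Let w'w : w' * w = 1. Proof. by rewrite mulrC. Qed.
Let w'_add : w' + w = -1. Proof. by rewrite addrC. Qed.

Definition twist (a b : L) := (a - w) * (b - w').

Lemma twistB (a b : L) : twist a b - twist b a = (a - b) * (w - w').
Proof. by rewrite /twist; ring. Qed.

Lemma twist_cross (a b A B : L) :
  twist a b * twist A B - twist b a * twist B A =
  (w - w') * ((A * a - 1) * ((1 + B) * (1 + b) - 1)
              - (B * b - 1) * ((1 + A) * (1 + a) - 1)).
Proof.
have w2 : w ^+ 2 = w' by exact: cube_root_sqr.
have w'2 : w' ^+ 2 = w by exact: cube_root_sqr.
rewrite /twist; ring: w2 w'2.
Qed.

Lemma cube_root_expr2n n : w ^+ (2 ^ n) = if odd n then w' else w.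
Proof.
elim: n => [|n IHn]; first by rewrite expr1.
rewrite expnSr exprM IHn /=; case: (odd n) => /=.
  exact: cube_root_sqr.
exact: cube_root_sqr.
Qed.

Section Frobenius.
Variable n : nat.
Hypothesis n_pchar : [pchar L].-nat n.

Lemma conj_cube_root_expr : w' ^+ n = -1 - w ^+ n.
Proof.
have -> : w' = -1 - w by rewrite -w_add; ring.
by rewrite exprBn_pchar // exprNn_pchar // expr1n.
Qed.

Lemma twist_expr_fix (a b : L) :
  w ^+ n = w -> twist a b ^+ n = twist (a ^+ n) (b ^+ n).
Proof.
move=> wn; rewrite exprMn !exprBn_pchar // conj_cube_root_expr wn.
by rewrite /twist -w_add; congr (_ * (_ - _)); ring.
Qed.

Lemma twist_expr_swap (a b : L) :
  w ^+ n = w' -> twist a b ^+ n = twist (b ^+ n) (a ^+ n).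
Proof.
move=> wn; rewrite exprMn !exprBn_pchar // conj_cube_root_expr wn.
by rewrite /twist mulrC -w_add; congr ((_ - _) * _); ring.
Qed.

Lemma root_neq0 (r : L) : r * r ^+ n = -1 - r -> r != 0.
Proof.
move=> rr; apply/eqP => r0; move: rr; rewrite r0 mul0r subr0 => /eqP.
by rewrite eq_sym oppr_eq0 oner_eq0.
Qed.

Lemma mul_twist_roots (a b : L) : a * a ^+ n = -1 - a -> b * b ^+ n = -1 - b ->
  a * b * twist (a ^+ n) (b ^+ n) = twist a b.
Proof.
move=> aa bb; rewrite /twist mulrACA (cube_root_shift ww' w_add aa).
by rewrite (cube_root_shift w'w w'_add bb) mulrACA w'w mul1r.
Qed.

End Frobenius.

Section Relations.
Variables (q Q : nat) (r s : L).
Hypotheses (q_pchar : [pchar L].-nat q) (Q_pchar : [pchar L].-nat Q).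
Hypotheses (r_root : r * r ^+ q = -1 - r) (s_root : s * s ^+ q = -1 - s).
Hypothesis rs_cross : cross_norm Q r s = cross_norm Q s r.

Local Notation X := (twist r s).
Local Notation Y := (twist s r).

Let rs_neq0 : r * s != 0.
Proof. exact: mulf_neq0 (root_neq0 r_root) (root_neq0 s_root). Qed.

Lemma twist_frob_fix : w ^+ q = w -> X ^+ q * Y = X * Y ^+ q.
Proof.
move=> wq; apply: (mulfI rs_neq0).
have XE : r * s * X ^+ q = X by rewrite twist_expr_fix // mul_twist_roots.
have YE : r * s * Y ^+ q = Y.
  by rewrite twist_expr_fix // [r * s]mulrC mul_twist_roots.
by rewrite mulrA XE [RHS]mulrCA YE.
Qed.

Lemma twist_frob_swap : w ^+ q = w' -> X ^+ q.+1 = Y ^+ q.+1.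
Proof.
move=> wq; apply: (mulfI rs_neq0).
have XE : r * s * X ^+ q = Y.
  by rewrite twist_expr_swap // [r * s]mulrC mul_twist_roots.
have YE : r * s * Y ^+ q = X by rewrite twist_expr_swap // mul_twist_roots.
by rewrite !exprSr [LHS]mulrA [RHS]mulrA XE YE mulrC.
Qed.

Let twist_cross_eq : X * twist (r ^+ Q) (s ^+ Q) = Y * twist (s ^+ Q) (r ^+ Q).
Proof.
have cross_normE (t u : L) :
    cross_norm Q t u = (t ^+ Q * t - 1) * ((1 + u ^+ Q) * (1 + u) - 1).
  rewrite /cross_norm !exprSr exprBn_pchar // exprNn_pchar // expr1n.
  by congr (_ * (_ - _)); ring.
by apply/eqP; rewrite -subr_eq0 twist_cross -!cross_normE rs_cross subrr mulr0.
Qed.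

Lemma twist_cross_fix : w ^+ Q = w -> X ^+ Q.+1 = Y ^+ Q.+1.
Proof. by move=> wQ; rewrite !exprS !twist_expr_fix // twist_cross_eq. Qed.

Lemma twist_cross_swap : w ^+ Q = w' -> X * Y ^+ Q = Y * X ^+ Q.
Proof. by move=> wQ; rewrite !twist_expr_swap // twist_cross_eq. Qed.

End Relations.
End Twist.

(* The exponents in the coprimality hypothesis are those of the relations that
   hold when x |-> x^(2^k) and x |-> x^(2^l) fix or swap w and w'. *)
Lemma char2_twist_roots_eq (L : fieldType) (k l : nat) (w w' r s : L) :
  2 \in [pchar L] -> w * w' = 1 -> w + w' = -1 -> (~~ odd k -> ~~ odd l) ->
  coprime (if odd k then 2 ^ k + 1 else 2 ^ k - 1)%N
          (if odd l then 2 ^ l - 1 else 2 ^ l + 1)%N ->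
  r * r ^+ (2 ^ k) = -1 - r -> s * s ^+ (2 ^ k) = -1 - s ->
  cross_norm (2 ^ l) r s = cross_norm (2 ^ l) s r -> r = s.
Proof.
move=> L2 ww' w_add kl cop r_root s_root rs_cross.
have q_pchar := pchar_nat_expn k L2; have Q_pchar := pchar_nat_expn l L2.
suff XY : twist w w' r s = twist w w' s r.
  have w_neq : w - w' != 0 by rewrite oppr_pchar2 // w_add oppr_eq0 oner_eq0.
  by apply/subr0_eq/(mulIf w_neq); rewrite mul0r -twistB XY subrr.
have wq := cube_root_expr2n ww' w_add k; have wQ := cube_root_expr2n ww' w_add l.
have [k_odd | k_even] := boolP (odd k); rewrite ?k_odd ?(negPf k_even) in wq cop.
  have XYq := twist_frob_swap ww' w_add q_pchar r_root s_root wq.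
  have [l_odd | l_even] := boolP (odd l); rewrite ?l_odd ?(negPf l_even) in wQ cop.
    have XYQ := twist_cross_swap ww' w_add Q_pchar rs_cross wQ.
    rewrite addn1 subn1 in cop; apply: (expf_inj_coprime cop XYq).
    apply: (expf_eq_cancel _ XYq) => //.
    by rewrite prednK ?expn_gt0 // mulrC -XYQ.
  rewrite !addn1 in cop.
  exact: expf_inj_coprime cop XYq (twist_cross_fix ww' w_add Q_pchar rs_cross wQ).
rewrite (negPf (kl k_even)) in wQ cop; rewrite addn1 subn1 in cop.
have XYQ := twist_cross_fix ww' w_add Q_pchar rs_cross wQ.
apply: (expf_inj_coprime cop _ XYQ); apply: (expf_eq_cancel _ XYQ) => //.
by rewrite prednK ?expn_gt0 // (twist_frob_fix ww' w_add q_pchar r_root s_root wq).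
Qed.

Lemma char2_roots_eq (F : countFieldType) (k l : nat) (r s : F) :
  2 \in [pchar F] -> (~~ odd k -> ~~ odd l) ->
  coprime (if odd k then 2 ^ k + 1 else 2 ^ k - 1)%N
          (if odd l then 2 ^ l - 1 else 2 ^ l + 1)%N ->
  r * r ^+ (2 ^ k) = -1 - r -> s * s ^+ (2 ^ k) = -1 - s ->
  cross_norm (2 ^ l) r s = cross_norm (2 ^ l) s r -> r = s.
Proof.
move=> F2 kl cop r_root s_root rs_cross.
have [L [f _]] := countable_algebraic_closure F.
have [w w_root] : exists w : L, w ^+ 2 + w + 1 = 0.
  have : size ('X^2 + 'X + 1 : {poly L}) != 1%N.
    by rewrite -addrA size_polyDl ?size_polyXn // size_XaddC.
  by case/closed_rootP => w; rewrite rootE !hornerE => /eqP; exists w.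
have fE t u : cross_norm (2 ^ l) (f t) (f u) = f (cross_norm (2 ^ l) t u).
  by rewrite /cross_norm !(rmorphM, rmorphB, rmorphXn, rmorphN1, rmorph1).
apply: (fmorph_inj f); apply: (@char2_twist_roots_eq L k l w (-1 - w)) => //.
- by rewrite (rmorph_pchar f).
- by apply: subr0_eq; rewrite -oppr0 -w_root; ring.
- by ring.
- by rewrite -rmorphXn -rmorphM r_root rmorphB rmorphN1.
- by rewrite -rmorphXn -rmorphM s_root rmorphB rmorphN1.
- by rewrite !fE rs_cross.
Qed.

(** * Trace-zero elements and the permutation property *)

Section TraceZero.
Variables (F : finFieldType) (q Q : nat).
Hypotheses (q_pchar : [pchar F].-nat q) (Q_pchar : [pchar F].-nat Q).
Hypothesis card_F : #|F| = (q ^ 3)%N.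
Hypothesis three_neq0 : 3%:R != 0 :> F.

Let q_gt0 : (0 < q)%N. Proof. by case/andP: q_pchar. Qed.

(* Also at y = 0, where y ^+ q / y = 0. *)
Lemma expr_frob_ratio (y : F) : y ^+ q = y * (y ^+ q / y).
Proof.
have [-> | y_neq0] := eqVneq y 0; first by rewrite expr0n gtn_eqF // mul0r.
by rewrite mulrC divfK.
Qed.

Lemma trace3_eq0_expr (y : F) : trace3 q y = 0 -> y ^+ (q ^ 2) = y * (-1 - y ^+ q / y).
Proof.
rewrite mulrBr mulrN1 -expr_frob_ratio => /eqP.
by rewrite /trace3 -addrA addr_eq0 => /eqP ->; rewrite opprD addrC.
Qed.

Lemma trace3_eq0_root (y : F) : y != 0 -> trace3 q y = 0 ->
  (y ^+ q / y) * (y ^+ q / y) ^+ q = -1 - y ^+ q / y.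
Proof.
move=> y_neq0 y_tr0; rewrite expr_div_n -exprM mulnn trace3_eq0_expr //.
by field; rewrite y_neq0 expf_neq0.
Qed.

Lemma trace3_eq0_frob_pow (y : F) : trace3 q y = 0 ->
  (y ^+ Q.+1) ^+ q = y ^+ Q.+1 * (y ^+ q / y) ^+ Q.+1 /\
  (y ^+ Q.+1) ^+ (q ^ 2) = y ^+ Q.+1 * (-1 - y ^+ q / y) ^+ Q.+1.
Proof.
by move=> y_tr0; rewrite !(exprAC _ Q.+1) {1}expr_frob_ratio trace3_eq0_expr // !exprMn.
Qed.

Hypothesis Q_cop : coprime #|F|.-1 Q.+1.

Lemma root_expr_neq1 (r : F) : r * r ^+ q = -1 - r -> r ^+ Q.+1 != 1.
Proof.
move=> rr; apply/eqP => rQ.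
have r1 : r = 1 by apply: (expf_card_inj _ Q_cop); rewrite // rQ expr1n.
move/eqP: three_neq0; apply; move: rr; rewrite r1 expr1n mulr1.
by move/eqP; rewrite -subr_eq0 => /eqP <-; ring.
Qed.

Lemma trace3_eq0_norm_eq0 (y : F) : trace3 q y = 0 ->
  (y == 0) = (y ^+ Q.+1 * ((y ^+ q / y) ^+ Q.+1 - 1) == 0).
Proof.
move=> y_tr0; have [-> | y_neq0] := eqVneq y 0; first by rewrite expr0n mul0r eqxx.
rewrite mulf_eq0 expf_eq0 (negPf y_neq0) andbF subr_eq0 /=.
by rewrite (negPf (root_expr_neq1 (trace3_eq0_root y_neq0 y_tr0))).
Qed.

Lemma frob_sub_trace3_inj (x x' : F) :
  x ^+ q - x = x' ^+ q - x' -> trace3 q x = trace3 q x' -> x = x'.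
Proof.
move=> eq_sub eq_tr; apply: subr0_eq; set z := x - x'.
have zq : z ^+ q = z by rewrite /z exprBn_pchar // -[x ^+ q](subrK x) eq_sub; ring.
have : trace3 q z = 0 by rewrite trace3B // eq_tr subrr.
rewrite /trace3 -mulnn exprM !zq (_ : z + z + z = 3%:R * z); last by ring.
by move/eqP; rewrite mulf_eq0 (negPf three_neq0) => /eqP.
Qed.

Hypothesis roots_eq : forall r s : F, r * r ^+ q = -1 - r -> s * s ^+ q = -1 - s ->
  cross_norm Q r s = cross_norm Q s r -> r = s.

Lemma trace3_eq0_inj (y1 y2 : F) : trace3 q y1 = 0 -> trace3 q y2 = 0 ->
  (y1 ^+ Q.+1 - y2 ^+ Q.+1) ^+ q = y1 ^+ Q.+1 - y2 ^+ Q.+1 -> y1 = y2.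
Proof.
move=> tr1 tr2 D_fix.
have [[A_q A_q2] [C_q C_q2]] := (trace3_eq0_frob_pow tr1, trace3_eq0_frob_pow tr2).
set r := y1 ^+ q / y1 in A_q A_q2; set s := y2 ^+ q / y2 in C_q C_q2.
set A := y1 ^+ Q.+1 in D_fix A_q A_q2 *; set C := y2 ^+ Q.+1 in D_fix C_q C_q2 *.
have E1 : A * (r ^+ Q.+1 - 1) = C * (s ^+ Q.+1 - 1).
  apply: subr0_eq; rewrite -(subrr (A - C)) -{1}D_fix (exprBn_pchar A C) //.
  by rewrite A_q C_q; ring.
have E2 : A * ((-1 - r) ^+ Q.+1 - 1) = C * ((-1 - s) ^+ Q.+1 - 1).
  have D_fix2 : (A - C) ^+ (q ^ 2) = A - C by rewrite -mulnn exprM !D_fix.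
  apply: subr0_eq; rewrite -(subrr (A - C)) -{1}D_fix2.
  rewrite (exprBn_pchar A C) ?pnatX ?q_pchar //.
  by rewrite A_q2 C_q2; ring.
have [// | AC] := eqVneq A C; first exact: expf_card_inj Q_cop.
have y12 : (y1 == 0) = (y2 == 0).
  by rewrite (trace3_eq0_norm_eq0 tr1) (trace3_eq0_norm_eq0 tr2) E1.
have y2_neq0 : y2 != 0.
  apply: contra_neq AC => y2_0; move: y12; rewrite y2_0 eqxx => /eqP y1_0.
  by rewrite /A /C y1_0 y2_0.
have y1_neq0 : y1 != 0 by rewrite y12.
have rs : r = s.
  apply: roots_eq; try exact: trace3_eq0_root.
  apply: (mulfI (expf_neq0 Q.+1 y1_neq0)); rewrite -/A.
  transitivity (C * (s ^+ Q.+1 - 1) * ((-1 - s) ^+ Q.+1 - 1)).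
    by rewrite -E1 /cross_norm mulrA.
  by rewrite /cross_norm [RHS]mulrCA E2; ring.
have s_neq1 : s ^+ Q.+1 - 1 != 0.
  by rewrite subr_eq0 root_expr_neq1 // trace3_eq0_root.
by move: AC; rewrite rs in E1; rewrite (mulIf s_neq1 E1) eqxx.
Qed.

Lemma f5_injective (R : nat) : [pchar F].-nat R ->
  injective (fun x : F => (f5 F q Q R).[x]).
Proof.
move=> R_pchar x x' /=; rewrite !horner_f5 //.
set y := x ^+ q - x; set y' := x' ^+ q - x'.
set t := trace3 q x; set t' := trace3 q x' => eq_f.
have D : y ^+ Q.+1 - y' ^+ Q.+1 = t' ^+ R - t ^+ R.
  by rewrite -[y ^+ Q.+1](addrK (t ^+ R)) eq_f; ring.
have yy' : y = y'.
  apply: trace3_eq0_inj; rewrite ?trace3_frob_sub //.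
  by rewrite D exprBn_pchar // !(exprAC _ R) !trace3_frob.
have tt' : t = t'.
  move: eq_f; rewrite yy' => /addrI tR.
  have : (t - t') ^+ R == 0 by rewrite exprBn_pchar // tR subrr.
  by rewrite expf_eq0 => /andP[_ /eqP /subr0_eq].
exact: frob_sub_trace3_inj.
Qed.

End TraceZero.

Lemma f5_permutes_char2 (F : finFieldType) (k l m : nat) :
  #|F| = ((2 ^ k) ^ 3)%N -> (0 < k)%N -> coprime (2 ^ k - 1) (2 ^ l + 1) ->
  permutes (f5 F (2 ^ k) (2 ^ l) (2 ^ m)).
Proof.
move=> card_F k_gt0 cop.
have F2 : 2 \in [pchar F].
  by apply: (@card_finPcharP _ _ (k * 3)); rewrite // card_F expnM.
have [kl cop_signed] := coprime_exp2_signed k_gt0 cop.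
apply: injF_bij; apply: f5_injective; rewrite ?pchar_nat_expn //.
- by rewrite -(GRing.natr_mod_pchar F2) oner_eq0.
- rewrite card_F -expnM -subn1 -[(2 ^ l).+1]addn1.
  rewrite coprime_exp2_subn1_addn1 ?muln_gt0 ?k_gt0 //.
  by rewrite lognM // (logn2_odd (isT : odd 3)) addn0 -coprime_exp2_subn1_addn1.
- by move=> r s; apply: char2_roots_eq.
Qed.

Lemma f5_mul_invariant (F : finFieldType) (q Q R : nat) (c x : F) :
  [pchar F].-nat q -> [pchar F].-nat Q -> [pchar F].-nat R ->
  c ^+ q = c -> c ^+ Q.+1 = 1 -> trace3 q x = 0 ->
  (f5 F q Q R).[c * x] = (f5 F q Q R).[x].
Proof.
move=> q_pchar Q_pchar R_pchar cq cQ x_tr0.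
by rewrite !horner_f5 // trace3_mull // x_tr0 mulr0 exprMn cq -mulrBr exprMn cQ mul1r.
Qed.

Lemma finField_prim_root (F : finFieldType) : exists g : F, #|F|.-1.-primitive_root g.
Proof.
have : has #|F|.-1.-primitive_root (enum [pred x : F | x != 0]).
  apply: has_prim_root; rewrite ?finField_card_pred_gt0 ?enum_uniq //.
    by apply/allP => x; rewrite mem_enum inE unity_rootE expf_card_pred => ->.
  by rewrite -cardE cardC1.
by case/hasP => g _; exists g.
Qed.

Lemma f5_not_injective (F : finFieldType) (q Q R : nat) :
  [pchar F].-nat q -> [pchar F].-nat Q -> [pchar F].-nat R ->
  #|F| = (q ^ 3)%N -> (1 < gcdn (q - 1) Q.+1)%N ->
  ~ injective (fun x : F => (f5 F q Q R).[x]).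
Proof.
move=> q_pchar Q_pchar R_pchar card_F d_gt1 f_inj.
set n := #|F|.-1; set d := gcdn _ _ in d_gt1.
have q_gt1 : (1 < q)%N.
  by rewrite -(ltn_exp2r 1 q (isT : (0 < 3)%N)) exp1n -card_F finNzRing_gt1.
have [g g_prim] := finField_prim_root F.
have d_n : (d %| n)%N.
  by rewrite (dvdn_trans (dvdn_gcdl _ _)) // /n card_F -subn1 dvdn_subn1_expn.
have c_prim := dvdn_prim_root g_prim d_n; set c := g ^+ _ in c_prim.
have c_neq1 : c != 1.
  apply: contraTneq d_gt1 => c1.
  by rewrite -leqNgt dvdn_leq // (prim_order_dvd c_prim) c1 expr1n.
have cq : c ^+ q = c.
  have /eqP c1 : c ^+ (q - 1) == 1 by rewrite -(prim_order_dvd c_prim) dvdn_gcdl.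
  by rewrite -[q](subnK (ltnW q_gt1)) exprD c1 mul1r expr1.
have cQ : c ^+ Q.+1 = 1 by apply/eqP; rewrite -(prim_order_dvd c_prim) dvdn_gcdr.
have x0_neq0 : g ^+ q - g != 0.
  have q_lt_n : (q < n)%N by rewrite /n card_F !expnS expn0 muln1; nia.
  rewrite subr_eq0 -{2}[g]expr1 (eq_prim_root_expr g_prim) !modn_small //.
    by rewrite (gtn_eqF q_gt1).
  exact: ltn_trans q_gt1 q_lt_n.
have := f_inj (c * (g ^+ q - g)) (g ^+ q - g).
rewrite /= f5_mul_invariant ?trace3_frob_sub // => /(_ erefl) /eqP.
rewrite -subr_eq0 -{2}[_ - g]mul1r -mulrBl mulf_eq0 subr_eq0.
by rewrite (negPf c_neq1) (negPf x0_neq0).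
Qed.

Local Close Scope ring_scope.
Unset Implicit Arguments.

Theorem corollary1p5 (p k l m : nat) (F : finFieldType) :
  prime p -> (0 < k)%N -> #|F| = (p ^ k) ^ 3 ->
  (permutes (f5 F (p ^ k) (p ^ l) (p ^ m)) <-> gcdn (p ^ k - 1) (p ^ l + 1) = 1%N)
  /\ (gcdn (p ^ k - 1) (p ^ l + 1) = 1%N <-> p = 2%N /\ ole (ord2 k) (ord2 l)).
Proof.
move=> p_pr k_gt0 card_F; have gcd_iff := gcdn_expn_subn1_addn1_eq1 l p_pr k_gt0.
split=> //; split=> [f_perm | gcd1]; last first.
  have [p2 _] := gcd_iff.1 gcd1; subst p.
  by apply: f5_permutes_char2; rewrite // /coprime gcd1.
have pF : (p \in [pchar F])%R.
  by apply: (@card_finPcharP _ _ (k * 3)); rewrite // card_F expnM.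
apply/eqP; rewrite eqn_leq gcdn_gt0 addn1 orbT andbT leqNgt; apply/negP => d_gt1.
apply: (f5_not_injective _ _ _ card_F d_gt1 (bij_inj f_perm)); exact: pchar_nat_expn.
Qed.
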